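(* Let $F$ be a (randomized) mechanism for the multi-agent kidney exchange game, and for each agent $i$ let $x_i$ be the random variable giving the utility of agent $i$ in $F$. Then there exists a mechanism $F^*$ such that for every input graph and every agent $i$, $\mathrm{Var}(y_i)\le \frac{\mathrm{Var}(x_i)}{2}+1$ and $E[y_i]=E[x_i]$, where $y_i$ is the random variable giving the utility of agent $i$ in $F^*$.
   Context: An instance of the multi-agent kidney exchange game is a graph $G=(V,E)$ together with a partition $V=V_1\cup\dots\cup V_m$ of its vertices among $m$ agents. A mechanism maps each instance to a (possibly random) matching of $G$. The utility of agent $i$ with respect to a matching $M$ is the number of vertices of $V_i$ covered by $M$; the utility of agent $i$ in a mechanism is this quantity for the (random) matching output by the mechanism. *)

From mathcomp Require Import all_boot all_order all_algebra.
Set Implicit Arguments. Unset Strict Implicit. Unset Printing Implicit Defensive.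
Import Order.TTheory GRing.Theory Num.Theory.
Local Open Scope ring_scope.

(* An instance on n vertices ('I_n) and m agents ('I_m):
   - an edge set E : {set {set 'I_n}} (each edge a 2-element vertex set),
   - an owner function own : 'I_n -> 'I_m; V_i = [set v | own v == i]. *)

Definition simple_graph (n : nat) (E : {set {set 'I_n}}) : bool :=
  [forall e in E, #|e| == 2]%N.

Definition is_matching (n : nat) (E M : {set {set 'I_n}}) : bool :=
  (M \subset E) && trivIset M.

Definition utility (n m : nat) (own : 'I_n -> 'I_m) (i : 'I_m)
    (M : {set {set 'I_n}}) : nat :=
  #|[set v in cover M | own v == i]|.

Definition is_random_matching (R : numDomainType) (n : nat)
    (E : {set {set 'I_n}}) (p : {ffun {set {set 'I_n}} -> R}) : Prop :=
  (forall M, 0 <= p M) /\ (\sum_M p M = 1) /\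
  (forall M, p M != 0 -> is_matching E M).

Definition mechanism (R : numDomainType) :=
  forall (n m : nat), {set {set 'I_n}} -> ('I_n -> 'I_m) ->
    {ffun {set {set 'I_n}} -> R}.

Definition is_mechanism (R : numDomainType) (F : mechanism R) : Prop :=
  forall (n m : nat) (E : {set {set 'I_n}}) (own : 'I_n -> 'I_m),
    simple_graph E -> is_random_matching E (F n m E own).

Definition exp_utility (R : numDomainType) (F : mechanism R) (n m : nat)
    (E : {set {set 'I_n}}) (own : 'I_n -> 'I_m) (i : 'I_m) : R :=
  \sum_M F n m E own M * (utility own i M)%:R.

Definition var_utility (R : numDomainType) (F : mechanism R) (n m : nat)
    (E : {set {set 'I_n}}) (own : 'I_n -> 'I_m) (i : 'I_m) : R :=
  \sum_M F n m E own M * ((utility own i M)%:R - exp_utility F E own i) ^+ 2.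

From mathcomp Require Import all_boot all_order all_algebra.
From mathcomp Require Import reals.
From mathcomp Require Import zify ring lra.
Import Order.TTheory GRing.Theory Num.Theory.
Set Implicit Arguments. Unset Strict Implicit. Unset Printing Implicit Defensive.
Local Open Scope ring_scope.

(* F* draws two matchings M1, M2 independently from F, rearranges them into
   matchings N, N' with u_i(N) + u_i(N') = u_i(M1) + u_i(M2) and
   |u_i(N) - u_i(N')| <= 2 for every agent i, and outputs N or N' with
   probability 1/2.  The mean is unchanged, and since
   ((x-mu)^2 + (y-mu)^2)/2 = ((x+y-2mu)^2 + (x-y)^2)/4, the variance becomes
   Var/4 + Var/4 + 1 (the cross term has mean 0 by independence).

   N takes M1 on some edges of the symmetric difference and M2 on the others.
   Give every edge of M1 \ M2 charge +1 and every edge of M2 \ M1 charge -1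
   at its two endpoints.  Two edges of opposite charge meeting at a vertex must
   go the same way; merging them cancels two units of l1-mass, so we end with
   agent-vectors of l1-norm at most 2.  Such vectors can be signed so that
   every coordinate of the signed sum is at most 2 in absolute value, again by
   merging two vectors sharing a nonzero coordinate with the sign that cancels
   it. *)

Lemma normD_opposite (x y : int) : x * y < 0 -> `|x + y| + 2 <= `|x| + `|y|.
Proof. by nia. Qed.

Lemma sumr_gt0_witness (R : realDomainType) (I : finType) (P : pred I) (F : I -> R) :
  0 < \sum_(t | P t) F t -> exists2 t, P t & 0 < F t.
Proof.
case: (pickP [pred t | P t && (0 < F t)]) => [t /andP[Pt Ft] _ | none]; first by exists t.
rewrite ltNge => /negP[]; apply: sumr_le0 => t Pt.
by move: (none t) => /=; rewrite Pt /= => /negbT; rewrite -leNgt.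
Qed.

Section Push.
Variables (I W : finType).
Implicit Types (D : I -> W -> int) (f g : I -> I).

Definition push f D (c : I) (w : W) : int := \sum_(t | f t == c) D t w.

Definition supp D := [set t | [exists w, D t w != 0]].

Definition merge (t s u : I) : I := if u == s then t else u.

Definition unique_pos D := forall w t s, 0 < D t w -> 0 < D s w -> t = s.

Lemma push_id D c w : push id D c w = D c w.
Proof. by rewrite /push big_pred1_eq. Qed.

Lemma push_comp g f D c w : push (g \o f) D c w = push g (push f D) c w.
Proof.
rewrite /push (partition_big f (fun u => g u == c)) //=.
apply: eq_bigr => u guc; apply: eq_bigl => t.
by case: (eqVneq (f t) u) => [-> | ]; rewrite ?guc ?andbF.
Qed.

Lemma pushN f D c w : push f (fun t w => - D t w) c w = - push f D c w.
Proof. by rewrite /push sumrN. Qed.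

Lemma push_merge D t s c w : t != s ->
  push (merge t s) D c w =
  if c == t then D t w + D s w else if c == s then 0 else D c w.
Proof.
move=> ts; rewrite /push /merge.
have [-> | ct] := eqVneq c t.
  rewrite (bigD1 t) ?(negbTE ts) ?eqxx //= (bigD1 s) ?eqxx 1?eq_sym //=.
  rewrite addrA big1 ?addr0 // => u /andP[/andP[]].
  by case: ifP => [/eqP -> | _ /eqP ->]; rewrite ?eqxx.
have [-> | cs] := eqVneq c s.
  by rewrite big1 // => u; case: ifP => [_ | ->]; rewrite ?(negbTE ts).
rewrite (big_pred1 c) // => u /=; case: ifP => [/eqP -> | //].
by rewrite eq_sym (negbTE ct) eq_sym (negbTE cs).
Qed.

Lemma card_supp_merge D t s : t != s -> t \in supp D -> s \in supp D ->
  (#|supp (push (merge t s) D)| < #|supp D|)%N.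
Proof.
move=> ts tD sD; rewrite [X in (_ < X)%N](cardsD1 s) sD add1n ltnS subset_leq_card //.
apply/subsetP => c; rewrite 3!inE => /existsP[w]; rewrite push_merge //.
have [-> _ | ct] := eqVneq c t; first by rewrite ts.
have [-> | cs] := eqVneq c s; first by [].
by move=> Dcw; apply/andP; split; last by rewrite inE; apply/existsP; exists w.
Qed.

Lemma unique_pos_push f D : unique_pos D -> unique_pos (push f D).
Proof.
move=> uD w a b /sumr_gt0_witness[t /eqP <- Dt] /sumr_gt0_witness[s /eqP <- Ds].
by rewrite (uD w t s).
Qed.

Lemma push_gt0 f D x y w : (forall t, D t w < 0 -> t = y) ->
  0 < D x w -> f x != f y -> 0 < push f D (f x) w.
Proof.
move=> negy Dx fxy; rewrite /push (bigD1 x) //= ltr_wpDr // sumr_ge0 // => t.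
case/andP=> /eqP ftx _; rewrite leNgt; apply/negP => /negy yt.
by move: fxy; rewrite -ftx yt eqxx.
Qed.

Lemma push_lt0 f D x y w : (forall t, 0 < D t w -> t = x) ->
  D y w < 0 -> f x != f y -> push f D (f y) w < 0.
Proof.
move=> posx Dy fxy; rewrite -oppr_gt0 -pushN.
apply: (@push_gt0 _ _ y x) => [t | | ]; rewrite ?oppr_lt0 ?oppr_gt0 1?eq_sym //.
exact: posx.
Qed.

End Push.

Lemma sum_sign_push (I : finType) (e : I -> bool) (f : I -> I) (G : I -> int) :
  \sum_t (-1) ^+ e (f t) * G t = \sum_c (-1) ^+ e c * \sum_(t | f t == c) G t.
Proof.
rewrite (partition_big f xpredT) //=; apply: eq_bigr => c _.
by rewrite mulr_sumr; apply: eq_bigr => t /eqP <-.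
Qed.

Lemma l1_push_merge (I W : finType) (D : I -> W -> int) t s w0 :
  t != s -> D t w0 * D s w0 < 0 ->
  (forall u, \sum_w `|D u w| <= 2) ->
  forall c, \sum_w `|push (merge t s) D c w| <= 2.
Proof.
move=> ts opp l1D c; under eq_bigr do rewrite push_merge //.
have [_ | _] := eqVneq c t.
  have cancel : \sum_w `|D t w + D s w| + 2 <= \sum_w `|D t w| + \sum_w `|D s w|.
    rewrite -big_split (bigD1 w0) //= [X in _ <= X](bigD1 w0) //= addrAC.
    by rewrite lerD ?normD_opposite // ler_sum // => w _; exact: ler_normD.
  by rewrite -(lerD2r 2); apply: le_trans cancel _; apply: lerD.
by case: eqP => _; [rewrite big1 ?normr0 | exact: l1D].
Qed.

Lemma sign_balancing (I A : finType) (a : I -> A -> int) :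
  (forall t, \sum_i `|a t i| <= 2) ->
  exists eps : I -> bool, forall i, `|\sum_t (-1) ^+ eps t * a t i| <= 2.
Proof.
have [k] := ubnP #|supp a|; elim: k a => // k IHk a supp_a l1a.
case: (boolP [exists t, exists s, exists i, [&& t != s, a t i != 0 & a s i != 0]]);
  last first.
  move=> /existsPn disjoint_a; exists (fun _ => false) => i.
  under eq_bigr do rewrite mul1r.
  have [t ati | none] := pickP [pred t | a t i != 0]; last first.
    by rewrite big1 ?normr0 // => t _; apply/eqP/negbFE/none.
  rewrite (bigD1 t) //= big1 ?addr0 => [|u ut].
    apply: le_trans (l1a t); rewrite (bigD1 i) //= lerDl.
    by apply: sumr_ge0 => j _.
  apply/eqP; apply: contraR (disjoint_a u) => aui.
  by apply/existsP; exists t; apply/existsP; exists i; rewrite aui ut.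
case/existsP=> t /existsP[s /existsP[i /and3P[ts ati asi]]].
(* flipping [s] when needed makes the [i]-th entries of [t] and [s] cancel *)
pose sigma u := ((0 < a t i) == (0 < a s i)) && (u == s).
pose b u j := (-1) ^+ sigma u * a u j.
have b_supp : supp b = supp a.
  by apply/setP => u; rewrite !inE; apply: eq_existsb => j; rewrite mulf_eq0 signr_eq0.
have opp : b t i * b s i < 0.
  rewrite /b /sigma (negbTE ts) eqxx andbT /=.
  by case: (ltrgt0P (a t i)) ati => // ? _; case: (ltrgt0P (a s i)) asi => //= ? _; nia.
have supp_lt : (#|supp (push (merge t s) b)| < k)%N.
  rewrite -ltnS (leq_trans _ supp_a) // ltnS -b_supp card_supp_merge // b_supp inE.
    by apply/existsP; exists i.
  by apply/existsP; exists i.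
have l1b : forall u, \sum_j `|b u j| <= 2.
  by move=> u; under eq_bigr do rewrite normrMsign; exact: l1a.
have [eps' Heps'] := IHk _ supp_lt (l1_push_merge ts opp l1b).
exists (fun u => eps' (merge t s u) (+) sigma u) => j.
have -> : \sum_u (-1) ^+ (eps' (merge t s u) (+) sigma u) * a u j =
          \sum_u (-1) ^+ eps' (merge t s u) * b u j.
  by apply: eq_bigr => u _; rewrite signr_addb -mulrA.
by rewrite sum_sign_push; exact: Heps'.
Qed.

Lemma merge_opposite (I W : finType) (D : I -> W -> int) :
  (forall t, \sum_w `|D t w| <= 2) ->
  unique_pos D -> unique_pos (fun t w => - D t w) ->
  exists phi : I -> I,
    (forall w t s, 0 < D t w -> D s w < 0 -> phi t = phi s) /\
    (forall c, \sum_w `|push phi D c w| <= 2).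
Proof.
have [k] := ubnP #|supp D|; elim: k D => // k IHk D supp_D l1D posD negD.
case: (boolP [exists w, exists t, exists s, (0 < D t w) && (D s w < 0)]); last first.
  move=> /existsPn no_opp; exists id; split => [w t s Dt Ds | c].
    by have /existsP[] := negbNE (no_opp w); exists t; apply/existsP; exists s; rewrite Dt.
  by under eq_bigr do rewrite push_id; exact: l1D.
case/existsP=> w0 /existsP[t /existsP[s /andP[Dt Ds]]].
have ts : t != s by apply: contraTneq Dt => ->; rewrite -leNgt ltW.
pose D' := push (merge t s) D.
have supp_lt : (#|supp D'| < k)%N.
  rewrite -ltnS (leq_trans _ supp_D) // ltnS card_supp_merge // inE.
    by apply/existsP; exists w0; rewrite gt_eqF.
  by apply/existsP; exists w0; rewrite lt_eqF.
have l1D' : forall c, \sum_w `|D' c w| <= 2.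
  by apply: (l1_push_merge (w0 := w0) ts _ l1D); rewrite pmulr_rlt0.
have posD' : unique_pos D' by exact: unique_pos_push.
have negD' : unique_pos (fun c w => - D' c w).
  move=> w a b; rewrite -!pushN; exact: (@unique_pos_push _ _ (merge t s) _ negD w a b).
have [phi' [opp' l1phi']] := IHk D' supp_lt l1D' posD' negD'.
exists (phi' \o merge t s); split => [w x y Dx Dy | c]; last first.
  by under eq_bigr do rewrite push_comp; exact: l1phi'.
rewrite /=; have [-> // | xy] := eqVneq (merge t s x) (merge t s y).
apply: (opp' w).
  by apply: push_gt0 Dx xy => u Du; apply: (negD w); rewrite oppr_gt0.
by apply: push_lt0 Dy xy => u Du; exact: posD Du Dx.
Qed.

Lemma opposite_sign_balancing (I W A : finType) (own : W -> A) (D : I -> W -> int) :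
  (forall t, \sum_w `|D t w| <= 2) ->
  unique_pos D -> unique_pos (fun t w => - D t w) ->
  exists eps : I -> bool,
    (forall w t s, 0 < D t w -> D s w < 0 -> eps t = eps s) /\
    (forall i, `|\sum_t (-1) ^+ eps t * \sum_(w | own w == i) D t w| <= 2).
Proof.
move=> l1D posD negD; have [phi [opp l1phi]] := merge_opposite l1D posD negD.
pose a c i := \sum_(w | own w == i) push phi D c w.
have l1a : forall c, \sum_i `|a c i| <= 2.
  move=> c; apply: le_trans (l1phi c).
  rewrite [X in _ <= X](partition_big own xpredT) //=.
  by apply: ler_sum => i _; exact: ler_norm_sum.
have [eps Heps] := sign_balancing l1a.
exists (eps \o phi); split => [w t s Dt Ds | i]; first by rewrite /= (opp w t s).
rewrite /comp sum_sign_push; under eq_bigr do rewrite exchange_big; exact: Heps.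
Qed.

Lemma card_set_cond (T : finType) (A : {set T}) (P : pred T) :
  #|[set v in A | P v]| = (\sum_(v in A) P v)%N.
Proof.
rewrite -sum1_card big_mkcond [RHS]big_mkcond; apply: eq_bigr => v _.
by rewrite inE; case: (v \in A); case: (P v).
Qed.

Section Recombination.
Variables (n m : nat) (E : {set {set 'I_n}}) (own : 'I_n -> 'I_m).
Variables M1 M2 : {set {set 'I_n}}.
Hypotheses (simpleE : simple_graph E).
Hypotheses (matching1 : is_matching E M1) (matching2 : is_matching E M2).

Definition weight (i : 'I_m) (e : {set 'I_n}) : nat := (\sum_(v in e) (own v == i))%N.

Lemma utility_trivIset (M : {set {set 'I_n}}) i : trivIset M ->
  (utility own i M)%:Z = \sum_e (e \in M)%:Z * (weight i e)%:Z.
Proof.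
move=> trivM; rewrite /utility card_set_cond big_trivIset // -natz natr_sum big_mkcond.
by apply: eq_bigr => e _; case: (e \in M); rewrite ?mul1r ?mul0r ?natz.
Qed.

Definition recombine (g : {set 'I_n} -> bool) := [set e | if g e then e \in M1 else e \in M2].

Definition charge (e : {set 'I_n}) (v : 'I_n) : int :=
  (v \in e)%:Z * ((e \in M1)%:Z - (e \in M2)%:Z).

Lemma charge_gt0 e v : (0 < charge e v) = [&& v \in e, e \in M1 & e \notin M2].
Proof. by rewrite /charge; case: (v \in e); case: (e \in M1); case: (e \in M2). Qed.

Lemma charge_lt0 e v : (charge e v < 0) = [&& v \in e, e \in M2 & e \notin M1].
Proof. by rewrite /charge; case: (v \in e); case: (e \in M1); case: (e \in M2). Qed.

Lemma sum_charge e i :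
  \sum_(v | own v == i) charge e v = ((e \in M1)%:Z - (e \in M2)%:Z) * (weight i e)%:Z.
Proof.
rewrite -[(weight i e)%:Z]natz natr_sum mulr_sumr [RHS]big_mkcond /= [LHS]big_mkcond /=.
apply: eq_bigr => v _; rewrite /charge.
by case: (v \in e); case: (own v == i); rewrite ?mulr0 ?mul0r ?mulr1 ?mul1r.
Qed.

Lemma recombine_matching g :
  (forall v e f, 0 < charge e v -> charge f v < 0 -> g e = g f) ->
  is_matching E (recombine g).
Proof.
move=> g_opp; case/andP: matching1 => /subsetP sub1 /trivIsetP triv1.
case/andP: matching2 => /subsetP sub2 /trivIsetP triv2.
apply/andP; split.
  by apply/subsetP => e; rewrite inE; case: (g e); [exact: sub1 | exact: sub2].
have cross e f : g e -> ~~ g f -> e \in M1 -> f \in M2 -> e != f -> [disjoint e & f].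
  move=> ge gf eM1 fM2 ef.
  have [eM2 | eM2] := boolP (e \in M2); first exact: triv2.
  have [fM1 | fM1] := boolP (f \in M1); first exact: triv1.
  rewrite -setI_eq0; apply/eqP/setP => v; rewrite !inE; apply/negP => /andP[ve vf].
  have := g_opp v e f; rewrite charge_gt0 charge_lt0 ve vf eM1 eM2 fM1 fM2 => /(_ isT isT).
  by move: gf; rewrite ge => /negbTE ->.
apply/trivIsetP => e f; rewrite !inE.
case ge: (g e); case gf: (g f) => eM fM ef.
- exact: triv1.
- by apply: cross; rewrite ?ge ?gf.
- by rewrite disjoint_sym; apply: cross; rewrite ?ge ?gf // eq_sym.
- exact: triv2.
Qed.

Lemma l1_charge e : \sum_v `|charge e v| <= 2.
Proof.
case/andP: matching1 => /subsetP sub1 _; case/andP: matching2 => /subsetP sub2 _.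
have [eM | eM] := boolP ((e \in M1) || (e \in M2)); last first.
  rewrite big1 // => v _; rewrite /charge.
  by move: eM; case: (e \in M1); case: (e \in M2); rewrite ?subrr ?mulr0.
have card_e : #|e| = 2%N.
  by apply/eqP; move/forall_inP: simpleE; apply; case/orP: eM => [/sub1 | /sub2].
apply: (@le_trans _ _ (\sum_(v in e) 1)); last by rewrite sumr_const card_e.
rewrite [X in _ <= X]big_mkcond; apply: ler_sum => v _; rewrite /charge.
by case: (v \in e); case: (e \in M1); case: (e \in M2).
Qed.

Lemma unique_pos_charge : unique_pos charge.
Proof.
case/andP: matching1 => _ /trivIsetP triv1 v e f.
rewrite !charge_gt0 => /and3P[ve eM _] /and3P[vf fM _].
apply/eqP; apply: contraT => ef.
by move: vf; rewrite (disjointFr (triv1 e f eM fM ef) ve).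
Qed.

Lemma unique_neg_charge : unique_pos (fun e v => - charge e v).
Proof.
case/andP: matching2 => _ /trivIsetP triv2 v e f.
rewrite !oppr_gt0 !charge_lt0 => /and3P[ve eM _] /and3P[vf fM _].
apply/eqP; apply: contraT => ef.
by move: vf; rewrite (disjointFr (triv2 e f eM fM ef) ve).
Qed.

Lemma balanced_recombination : exists N N' : {set {set 'I_n}},
  [/\ is_matching E N, is_matching E N' &
      forall i, (utility own i N + utility own i N' =
                 utility own i M1 + utility own i M2)%N /\
                `|(utility own i N)%:Z - (utility own i N')%:Z| <= 2].
Proof.
have [eps [eps_opp eps_bal]] :=
  opposite_sign_balancing own l1_charge unique_pos_charge unique_neg_charge.
have N_matching : is_matching E (recombine (negb \o eps)).
  by apply: recombine_matching => v e f ev fv /=; rewrite (eps_opp v e f).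
have N'_matching : is_matching E (recombine eps).
  exact: recombine_matching eps_opp.
case/andP: (N_matching) => _ trivN; case/andP: (N'_matching) => _ trivN'.
case/andP: matching1 => _ triv1; case/andP: matching2 => _ triv2.
exists (recombine (negb \o eps)), (recombine eps); split=> // i; split.
  apply/eqP; rewrite -eqz_nat !PoszD !utility_trivIset // -!big_split /=.
  by apply/eqP/eq_bigr => e _; rewrite !inE /=; case: (eps e) => //; rewrite addrC.
rewrite !utility_trivIset // -sumrB.
have -> : \sum_e ((e \in recombine (negb \o eps))%:Z * (weight i e)%:Z -
                  (e \in recombine eps)%:Z * (weight i e)%:Z) =
          \sum_e (-1) ^+ eps e * \sum_(v | own v == i) charge e v.
  apply: eq_bigr => e _; rewrite sum_charge !inE /=.
  by case: (eps e); rewrite ?expr0 ?expr1; ring.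
exact: eps_bal.
Qed.

End Recombination.

Lemma balanced_sqr_le (R : realFieldType) (x y s t mu : R) :
  x + y = s + t -> `|x - y| <= 2 ->
  ((x - mu) ^+ 2 + (y - mu) ^+ 2) / 2 <=
  ((s - mu) ^+ 2 / 4 + 1) + (t - mu) ^+ 2 / 4 + (s - mu) / 2 * (t - mu).
Proof. by move=> xyst; rewrite ler_norml => /andP[? ?]; nra. Qed.

Section Mixture.
Variables (R : realFieldType) (T : finType).

Definition mean (p u : T -> R) : R := \sum_x p x * u x.

Definition variance (p u : T -> R) : R := \sum_x p x * (u x - mean p u) ^+ 2.

Variables (p : T -> R) (r : T -> T -> T * T).

(* draw [x] and [y] independently from [p], then output [(r x y).1] or
   [(r x y).2] with probability 1/2 each *)
Definition mixture : {ffun T -> R} :=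
  [ffun z => \sum_x \sum_y p x * p y * (((z == (r x y).1)%:R + (z == (r x y).2)%:R) / 2)].

Lemma mean_mixture u :
  mean mixture u = \sum_x \sum_y p x * p y * ((u (r x y).1 + u (r x y).2) / 2).
Proof.
rewrite /mean; under eq_bigr do rewrite ffunE mulr_suml.
rewrite exchange_big; apply: eq_bigr => x _; under eq_bigr do rewrite mulr_suml.
rewrite exchange_big; apply: eq_bigr => y _.
have pick1 z0 : \sum_z (z == z0)%:R * u z = u z0.
  by rewrite (bigD1 z0) //= eqxx mul1r big1 ?addr0 // => z /negbTE ->; rewrite mul0r.
transitivity (p x * p y * ((\sum_z (z == (r x y).1)%:R * u z +
                            \sum_z (z == (r x y).2)%:R * u z) / 2)); last by rewrite !pick1.
by rewrite -big_split /= mulr_suml mulr_sumr; apply: eq_bigr => z _; ring.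
Qed.

Lemma mixture_support (P : pred T) :
  (forall x, p x != 0 -> P x) ->
  (forall x y, P x -> P y -> P (r x y).1 && P (r x y).2) ->
  forall z, mixture z != 0 -> P z.
Proof.
move=> p_supp r_supp z; apply: contraR => Pz; rewrite ffunE.
apply/eqP/big1 => x _; apply/big1 => y _.
have [-> | px] := eqVneq (p x) 0; first by rewrite !mul0r.
have [-> | py] := eqVneq (p y) 0; first by rewrite mulr0 mul0r.
have /andP[P1 P2] := r_supp x y (p_supp x px) (p_supp y py).
have /negbTE-> : z != (r x y).1 by apply: contraNneq Pz => ->.
have /negbTE-> : z != (r x y).2 by apply: contraNneq Pz => ->.
by rewrite add0r mul0r mulr0.
Qed.

Lemma mean_mulr u a : mean p (fun x => u x * a) = mean p u * a.
Proof. by rewrite /mean mulr_suml; apply: eq_bigr => x _; rewrite mulrA. Qed.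

Lemma eq_sum2_supp (F G : T -> T -> R) :
  (forall x y, p x != 0 -> p y != 0 -> F x y = G x y) ->
  \sum_x \sum_y p x * p y * F x y = \sum_x \sum_y p x * p y * G x y.
Proof.
move=> FG; apply: eq_bigr => x _; apply: eq_bigr => y _.
have [-> | px] := eqVneq (p x) 0; first by rewrite !mul0r.
have [-> | py] := eqVneq (p y) 0; first by rewrite mulr0 !mul0r.
by rewrite FG.
Qed.

Hypotheses (p_ge0 : forall x, 0 <= p x) (p_sum1 : \sum_x p x = 1).

Lemma mean_addr u b : mean p (fun x => u x + b) = mean p u + b.
Proof.
rewrite /mean -[b in RHS]mul1r -p_sum1 mulr_suml -big_split /=.
by apply: eq_bigr => x _; rewrite mulrDr.
Qed.

Lemma mixture_ge0 z : 0 <= mixture z.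
Proof.
rewrite ffunE; do 2!apply: sumr_ge0 => ? _.
by rewrite !mulr_ge0 ?invr_ge0 ?addr_ge0 ?ler0n.
Qed.

Lemma mixture_sum1 : \sum_z mixture z = 1.
Proof.
have := mean_mixture (fun _ => 1); rewrite /mean.
under eq_bigr do rewrite mulr1; move=> ->.
have half2 : (1 + 1) / 2 = 1 :> R by lra.
under eq_bigr do under eq_bigr do rewrite half2 mulr1.
by under eq_bigr do rewrite -mulr_sumr p_sum1 mulr1.
Qed.

Lemma sum2_sep (A B C D : T -> R) :
  \sum_x \sum_y p x * p y * (A x + B y + C x * D y) =
  mean p A + mean p B + mean p C * mean p D.
Proof.
transitivity (\sum_x \sum_y (p x * A x * p y + p x * (p y * B y) +
                             p x * C x * (p y * D y))).
  by do 2!(apply: eq_bigr => ? _); ring.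
under eq_bigr do rewrite !big_split /= -!mulr_sumr p_sum1 mulr1.
by rewrite !big_split /= -!mulr_suml p_sum1 mul1r.
Qed.

Lemma mean_cst c : mean p (fun _ => c) = c.
Proof. by rewrite /mean -mulr_suml p_sum1 mul1r. Qed.

Lemma ler_sum2_supp (F G : T -> T -> R) :
  (forall x y, p x != 0 -> p y != 0 -> F x y <= G x y) ->
  \sum_x \sum_y p x * p y * F x y <= \sum_x \sum_y p x * p y * G x y.
Proof.
move=> FG; apply: ler_sum => x _; apply: ler_sum => y _.
have [-> | px] := eqVneq (p x) 0; first by rewrite !mul0r.
have [-> | py] := eqVneq (p y) 0; first by rewrite mulr0 !mul0r.
by rewrite ler_wpM2l ?mulr_ge0 ?FG.
Qed.

Variable u : T -> R.
Hypothesis r_sum : forall x y, p x != 0 -> p y != 0 ->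
  u (r x y).1 + u (r x y).2 = u x + u y.
Hypothesis r_close : forall x y, p x != 0 -> p y != 0 ->
  `|u (r x y).1 - u (r x y).2| <= 2.

Lemma mean_mixture_eq : mean mixture u = mean p u.
Proof.
rewrite mean_mixture (@eq_sum2_supp _ (fun x y => u x / 2 + u y / 2 + 0 * 0)).
  by rewrite sum2_sep !mean_mulr mean_cst; lra.
by move=> x y px py; rewrite r_sum //; lra.
Qed.

Lemma variance_mixture_le : variance mixture u <= variance p u / 2 + 1.
Proof.
set mu := mean p u.
have -> : variance mixture u = mean mixture (fun z => (u z - mu) ^+ 2).
  by rewrite /variance mean_mixture_eq.
rewrite mean_mixture; apply: le_trans (@ler_sum2_supp _
  (fun x y => ((u x - mu) ^+ 2 / 4 + 1) + (u y - mu) ^+ 2 / 4 + (u x - mu) / 2 * (u y - mu)) _) _.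
  by move=> x y px py; apply: balanced_sqr_le; [exact: r_sum | exact: r_close].
rewrite sum2_sep !mean_addr !mean_mulr mean_addr subrr.
have -> : mean p (fun x => (u x - mu) ^+ 2) = variance p u by [].
lra.
Qed.

End Mixture.

Definition balanced (n m : nat) (own : 'I_n -> 'I_m)
    (M1 M2 N N' : {set {set 'I_n}}) : bool :=
  [forall i, (utility own i N + utility own i N' ==
              utility own i M1 + utility own i M2)%N &&
             (`|(utility own i N)%:Z - (utility own i N')%:Z| <= 2)].

Definition rebalance (n m : nat) (E : {set {set 'I_n}}) (own : 'I_n -> 'I_m)
    (M1 M2 : {set {set 'I_n}}) : {set {set 'I_n}} * {set {set 'I_n}} :=
  odflt (M1, M2) [pick NN | [&& is_matching E NN.1, is_matching E NN.2 &
                                balanced own M1 M2 NN.1 NN.2]].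

Section Rebalance.
Variables (n m : nat) (E : {set {set 'I_n}}) (own : 'I_n -> 'I_m).
Variables M1 M2 : {set {set 'I_n}}.
Hypotheses (matching1 : is_matching E M1) (matching2 : is_matching E M2).

Lemma rebalance_matching :
  is_matching E (rebalance E own M1 M2).1 && is_matching E (rebalance E own M1 M2).2.
Proof. by rewrite /rebalance; case: pickP => [NN /and3P[-> ->] | _] //=; rewrite matching1. Qed.

Lemma rebalance_balanced : simple_graph E ->
  balanced own M1 M2 (rebalance E own M1 M2).1 (rebalance E own M1 M2).2.
Proof.
move=> simpleE; rewrite /rebalance; case: pickP => [NN /and3P[] // | none].
have [N [N' [matchN matchN' bal]]] := balanced_recombination own simpleE matching1 matching2.
have := none (N, N'); rewrite /= matchN matchN' /=; move/negbT/negP; case.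
by apply/forallP => i; have [-> ->] := bal i; rewrite eqxx.
Qed.

End Rebalance.

Lemma ler_natr_dist (R : numDomainType) (a b : nat) :
  `|a%:Z - b%:Z| <= 2 -> `|a%:R - b%:R : R| <= 2.
Proof. by rewrite -(ler_int R) intr_norm rmorphB. Qed.

Theorem lemma2 (R : realType) (F : mechanism R) :
  is_mechanism F ->
  exists Fs : mechanism R, is_mechanism Fs /\
    forall (n m : nat) (E : {set {set 'I_n}}) (own : 'I_n -> 'I_m),
      simple_graph E ->
      forall i : 'I_m,
        var_utility Fs E own i <= var_utility F E own i / 2 + 1 /\
        exp_utility Fs E own i = exp_utility F E own i.
Proof.
move=> F_mech.
exists (fun n m E own => mixture (F n m E own) (rebalance E own)); split.
  move=> n m E own simpleE; have [p_ge0 [p_sum1 p_supp]] := F_mech n m E own simpleE.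
  split; [exact: mixture_ge0 | split; first exact: mixture_sum1].
  apply: mixture_support => // M1 M2; exact: rebalance_matching.
move=> n m E own simpleE i.
have [p_ge0 [p_sum1 p_supp]] := F_mech n m E own simpleE.
pose u M := (utility own i M)%:R : R.
have bal M1 M2 : F n m E own M1 != 0 -> F n m E own M2 != 0 ->
    (u (rebalance E own M1 M2).1 + u (rebalance E own M1 M2).2 = u M1 + u M2) /\
    `|u (rebalance E own M1 M2).1 - u (rebalance E own M1 M2).2| <= 2.
  move=> /p_supp M1m /p_supp M2m.
  have /forallP/(_ i)/andP[/eqP sum_eq close] := rebalance_balanced own M1m M2m simpleE.
  by rewrite /u -!natrD sum_eq; split=> //; exact: ler_natr_dist.
have r_sum x y px py := (bal x y px py).1.
have r_close x y px py := (bal x y px py).2.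
split; first exact: (variance_mixture_le p_ge0 p_sum1 r_sum r_close).
exact: (mean_mixture_eq p_sum1 r_sum).
Qed.
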